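(* Under the hypotheses of Theorem 2 (bounds $0\le\nu_i<\mu_i$, $\sum\nu_i\le1\le\sum\mu_i$, $\Phi\in\Lambda$), suppose $\xi^*=\{(\boldsymbol{x}_i,w_i)\}$ is $\Phi$-optimal in $\Xi$ with $\Phi(\xi^* )<\infty$, and let $\mathcal{X}_1=\{\boldsymbol{x}_i:w_i=\nu_i\}$, $\mathcal{X}_3=\{\boldsymbol{x}_i:w_i=\mu_i\}$, $\mathcal{X}_2=\{\boldsymbol{x}_i:\nu_i<w_i<\mu_i\}$. If $\mathcal{X}_2\ne\emptyset$, then $F_\Phi(\xi^*;\boldsymbol{x}_i)$ takes a common value $s$ for all $\boldsymbol{x}_i\in\mathcal{X}_2$, and $$s=\frac{-\sum_{\boldsymbol{x}_i\in\mathcal{X}_1}F_\Phi(\xi^*;\boldsymbol{x}_i)\nu_i-\sum_{\boldsymbol{x}_i\in\mathcal{X}_3}F_\Phi(\xi^*;\boldsymbol{x}_i)\mu_i}{1-\left(\sum_{\boldsymbol{x}_i\in\mathcal{X}_1}\nu_i+\sum_{\boldsymbol{x}_i\in\mathcal{X}_3}\mu_i\right)}.$$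
   Context: Design space $\mathcal{X}=\{\boldsymbol{x}_1,\ldots,\boldsymbol{x}_N\}$; designs $\xi=\{(\boldsymbol{x}_i,w_i)\}$ with $w_i\ge0$, $\sum w_i=1$; $\Xi$ is the set of designs with $\nu_i\le w_i\le\mu_i$. $\Phi(\xi)$ is a criterion of $M(\xi)=\sum_iw_iI_{\boldsymbol\theta}(\boldsymbol{x}_i)$ ($+\infty$ when undefined). $F_\Phi(\xi,\eta)=\lim_{\alpha\downarrow0}[\Phi((1-\alpha)\xi+\alpha\eta)-\Phi(\xi)]/\alpha$ and $F_\Phi(\xi;\boldsymbol{x}_i)=F_\Phi(\xi,\delta_{\boldsymbol{x}_i})$ with $\delta_{\boldsymbol{x}_i}$ the one-point design at $\boldsymbol{x}_i$. $\Lambda$: criteria that are convex in the weights, linearly differentiable ($F_\Phi(\xi,\eta)=\sum_i\lambda_iF_\Phi(\xi;\boldsymbol{x}_i)$ for $\eta=\{(\boldsymbol{x}_i,\lambda_i)\}$ whenever $\Phi(\xi)<\infty$), and infinitely differentiable along line segments of designs. *)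

From HB Require Import structures.
From mathcomp Require Import all_boot all_order all_algebra.
From mathcomp Require Import all_classical all_reals all_analysis.
Set Implicit Arguments. Unset Strict Implicit. Unset Printing Implicit Defensive.
Import Order.TTheory GRing.Theory Num.Theory numFieldNormedType.Exports.
Local Open Scope classical_set_scope.
Local Open Scope ring_scope.

Section Defs.
Variable R : realType.
Variable N : nat.

(* A design on X = {x_1,...,x_N} is identified with its weight vector. *)
Definition is_design (w : 'I_N -> R) : Prop :=
  (forall i, 0 <= w i) /\ \sum_i w i = 1.

Definition in_Xi (nu mu : 'I_N -> R) (w : 'I_N -> R) : Prop :=
  is_design w /\ forall i, nu i <= w i <= mu i.

Definition mixd (xi eta : 'I_N -> R) (a : R) : 'I_N -> R :=
  fun i => (1 - a) * xi i + a * eta i.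

Definition delta (i : 'I_N) : 'I_N -> R := fun j => (j == i)%:R.

Definition info_mx (p : nat) (I : 'I_N -> 'M[R]_p) (w : 'I_N -> R) : 'M[R]_p :=
  \sum_i w i *: I i.

Definition dirquot (Phi : ('I_N -> R) -> \bar R) (xi eta : 'I_N -> R) (a : R)
  : \bar R := ((Phi (mixd xi eta a) - Phi xi) * (a^-1)%:E)%E.

Definition Fdir (Phi : ('I_N -> R) -> \bar R) (xi eta : 'I_N -> R) : \bar R :=
  lim (dirquot Phi xi eta a @[a --> 0^'+]).

Definition Fpt (Phi : ('I_N -> R) -> \bar R) (xi : 'I_N -> R) (i : 'I_N) : R :=
  fine (Fdir Phi xi (delta i)).

Definition convex_in_weights (Phi : ('I_N -> R) -> \bar R) : Prop :=
  forall xi eta a, is_design xi -> is_design eta -> 0 <= a <= 1 ->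
    (Phi (mixd xi eta a) <= (1 - a)%:E * Phi xi + a%:E * Phi eta)%E.

Definition lin_differentiable (Phi : ('I_N -> R) -> \bar R) : Prop :=
  forall xi, is_design xi -> (Phi xi < +oo)%E ->
    (forall i, exists d : R, dirquot Phi xi (delta i) a @[a --> 0^'+] --> d%:E)
    /\ (forall eta, is_design eta ->
          dirquot Phi xi eta a @[a --> 0^'+]
            --> (\sum_i eta i * Fpt Phi xi i)%:E).

Definition smooth_on_segments (Phi : ('I_N -> R) -> \bar R) : Prop :=
  forall xi eta, is_design xi -> is_design eta ->
    forall (n : nat) (a : R), 0 < a < 1 -> (Phi (mixd xi eta a) < +oo)%E ->
      derivable (derive1n n (fun t => fine (Phi (mixd xi eta t)))) a 1.

Definition in_Lambda (Phi : ('I_N -> R) -> \bar R) : Prop :=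
  convex_in_weights Phi /\ lin_differentiable Phi /\ smooth_on_segments Phi.

Definition optimal_in_Xi (Phi : ('I_N -> R) -> \bar R) (nu mu w : 'I_N -> R)
  : Prop := in_Xi nu mu w /\ forall eta, in_Xi nu mu eta -> (Phi w <= Phi eta)%E.

End Defs.

From HB Require Import structures.
From mathcomp Require Import all_boot all_order all_algebra.
From mathcomp Require Import all_classical all_reals all_analysis.
From mathcomp Require Import ring lra.
Set Implicit Arguments. Unset Strict Implicit. Unset Printing Implicit Defensive.
Import Order.TTheory GRing.Theory Num.Theory.
Local Open Scope ring_scope.

(* Write F_i for F_Phi(xi*; x_i).  Linear differentiability turns the
   directional derivative of Phi at xi* towards any design eta into
   sum_i eta_i F_i; towards xi* itself it vanishes, and towards any eta in
   Xi it is nonnegative by optimality.  Moving a small mass from an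
   interior point x_i to an interior point x_j stays in Xi, so F_i <= F_j,
   and F is constant, equal to s, on X_2.  Splitting sum_i w_i F_i = 0 and
   sum_i w_i = 1 along X_1, X_3, X_2 then yields the formula for s. *)

Section Designs.
Variables (R : realType) (N : nat).
Implicit Types (nu mu w eta : 'I_N -> R) (g : 'I_N -> R).

Lemma mixd_id w a : mixd w w a = w.
Proof. by apply/funext => i; rewrite /mixd; ring. Qed.

Lemma sum_delta_mul (j : 'I_N) g : \sum_k delta R j k * g k = g j.
Proof.
rewrite (bigD1 j) //= /delta eqxx mul1r big1 ?addr0 // => k /negbTE ->.
by rewrite mul0r.
Qed.

Lemma in_Xi_mixd nu mu w eta a :
  in_Xi nu mu w -> in_Xi nu mu eta -> 0 <= a <= 1 ->
  in_Xi nu mu (mixd w eta a).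
Proof.
move=> [[w0 w1] wb] [[e0 e1] eb] /andP[a0 a1]; split; first split.
- by move=> i; rewrite /mixd; have := w0 i; have := e0 i; nra.
- by rewrite /mixd big_split /= -!mulr_sumr w1 e1; lra.
- move=> i; rewrite /mixd; have /andP[? ?] := wb i; have /andP[? ?] := eb i.
  by apply/andP; split; nra.
Qed.

Definition transfer w (i j : 'I_N) (e : R) : 'I_N -> R :=
  fun k => w k + e * (delta R j k - delta R i k).

Lemma sum_transfer_mul w i j e g :
  \sum_k transfer w i j e k * g k = \sum_k w k * g k + e * (g j - g i).
Proof.
rewrite /transfer; under eq_bigr do rewrite mulrDl.
rewrite big_split /= -(sum_delta_mul j g) -(sum_delta_mul i g) -sumrB mulr_sumr.
by congr (_ + _); apply: eq_bigr => k _; ring.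
Qed.

Lemma in_Xi_transfer nu mu w (i j : 'I_N) e :
  (forall k, 0 <= nu k) -> in_Xi nu mu w -> i != j ->
  0 <= e -> e <= mu j - w j -> e <= w i - nu i ->
  in_Xi nu mu (transfer w i j e).
Proof.
move=> nu_ge0 [[_ w1] wb] ij e0 ej ei.
have bounds k : nu k <= transfer w i j e k <= mu k.
  rewrite /transfer /delta.
  have [->|kj] := eqVneq k j.
    have /andP[? ?] := wb j; rewrite eq_sym (negbTE ij) subr0 mulr1.
    by apply/andP; split; lra.
  have [->|ki] := eqVneq k i.
    have /andP[? ?] := wb i.
    by rewrite sub0r mulrN1; apply/andP; split; lra.
  by rewrite subrr mulr0 addr0.
split=> //; split.
- by move=> k; have /andP[? _] := bounds k; have := nu_ge0 k; lra.
- have := sum_transfer_mul w i j e (fun _ => 1).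
  by rewrite subrr mulr0 addr0 !(eq_bigr _ (fun k _ => mulr1 _)) w1.
Qed.

End Designs.

Section BoundsSplit.
Variables (R : realFieldType) (N : nat) (nu mu w : 'I_N -> R).
Hypotheses (nu_lt_mu : forall k, nu k < mu k)
           (w_bounds : forall k, nu k <= w k <= mu k).

Lemma big_bounds_split (g : 'I_N -> R) :
  \sum_k g k = \sum_(k | w k == nu k) g k + \sum_(k | w k == mu k) g k
               + \sum_(k | nu k < w k < mu k) g k.
Proof.
rewrite (bigID (fun k => w k == nu k)) /= -addrA; congr (_ + _).
rewrite (bigID (fun k => w k == mu k)) /=; congr (_ + _); apply: eq_bigl => k.
  case: (eqVneq (w k) (mu k)) => [->|_]; last by rewrite andbF.
  by rewrite andbT (gt_eqF (nu_lt_mu k)).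
have /andP[lo hi] := w_bounds k.
by rewrite !lt_neqAle lo hi !andbT (eq_sym (nu k)).
Qed.

Lemma interior_common_value (F : 'I_N -> R) s (i0 : 'I_N) :
  (forall k, 0 <= nu k) -> \sum_k w k = 1 -> \sum_k w k * F k = 0 ->
  nu i0 < w i0 < mu i0 -> (forall k, nu k < w k < mu k -> F k = s) ->
  s = (- (\sum_(k | w k == nu k) F k * nu k)
       - (\sum_(k | w k == mu k) F k * mu k))
      / (1 - (\sum_(k | w k == nu k) nu k + \sum_(k | w k == mu k) mu k)).
Proof.
move=> nu_ge0 w_sum1 wF_sum0 i0_int F_int.
set D := \sum_(k | nu k < w k < mu k) w k.
have D_gt0 : 0 < D.
  rewrite /D (bigD1 i0) //=; apply: ltr_pwDl.
    by have /andP[? _] := i0_int; have := nu_ge0 i0; lra.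
  by apply: sumr_ge0 => k /andP[/andP[? _] _]; have := nu_ge0 k; lra.
have at_bound (c : 'I_N -> R) (g : R -> R -> R) :
    \sum_(k | w k == c k) g (w k) (F k) = \sum_(k | w k == c k) g (c k) (F k).
  by apply: eq_bigr => k /eqP ->.
have wF_split := big_bounds_split (fun k => w k * F k).
have w_split := big_bounds_split w.
rewrite wF_sum0 (at_bound nu (fun a b => a * b)) in wF_split.
rewrite (at_bound mu (fun a b => a * b)) in wF_split.
rewrite w_sum1 (at_bound nu (fun a _ => a)) (at_bound mu (fun a _ => a)) -/D
  in w_split.
have interior_wF : \sum_(k | nu k < w k < mu k) w k * F k = D * s.
  by rewrite /D mulr_suml; apply: eq_bigr => k /F_int ->.
rewrite interior_wF in wF_split.
have -> : 1 - (\sum_(k | w k == nu k) nu k + \sum_(k | w k == mu k) mu k) = D.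
  by lra.
apply: (mulIf (lt0r_neq0 D_gt0)); rewrite divfK ?lt0r_neq0 //.
rewrite !(eq_bigr _ (fun k _ => mulrC (F k) _)); lra.
Qed.

End BoundsSplit.

Section DirectionalDerivative.
Variables (R : realType) (N : nat) (Phi : ('I_N -> R) -> \bar R).
Hypothesis Phi_lin : lin_differentiable Phi.
Local Open Scope classical_set_scope.

Lemma cvg_at_right_unique {f : R -> \bar R} {l l' : \bar R} :
  f x @[x --> 0^'+] --> l -> f x @[x --> 0^'+] --> l' -> l = l'.
Proof. exact: (cvg_unique (@ereal_hausdorff R)). Qed.

Lemma dirquot_self xi a : dirquot Phi xi xi a = ((Phi xi - Phi xi) * a^-1%:E)%E.
Proof. by rewrite /dirquot mixd_id. Qed.

Lemma lin_differentiable_fin_num xi :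
  is_design xi -> (Phi xi < +oo)%E -> Phi xi \is a fin_num.
Proof.
move=> xi_design xi_fin; have [_ Phi_dir] := Phi_lin xi_design xi_fin.
move: xi_fin; case Phi_xi: (Phi xi) => [r| |] //= _.
(* In the extended reals -oo - -oo = -oo, so the quotient is -oo throughout. *)
suff : dirquot Phi xi xi a @[a --> 0^'+] --> -oo%E.
  by move/(cvg_at_right_unique (Phi_dir xi xi_design)).
apply: cvg_near_cst; near=> a.
have a_gt0 : 0 < a by near: a; exact: nbhs_right_gt.
by rewrite dirquot_self Phi_xi /= gt0_mulNye // lte_fin invr_gt0.
Unshelve. all: by end_near.
Qed.

Lemma lin_differentiable_sum_self xi :
  is_design xi -> (Phi xi < +oo)%E -> \sum_i xi i * Fpt Phi xi i = 0.
Proof.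
move=> xi_design xi_fin; have [_ Phi_dir] := Phi_lin xi_design xi_fin.
have xi_fin_num := lin_differentiable_fin_num xi_design xi_fin.
suff : dirquot Phi xi xi a @[a --> 0^'+] --> 0%E.
  by move/(cvg_at_right_unique (Phi_dir xi xi_design)) => [].
apply: cvg_near_cst; near=> a.
by rewrite dirquot_self subee // mul0e.
Unshelve. all: by end_near.
Qed.

Section Optimum.
Variables (nu mu w : 'I_N -> R).
Hypotheses (w_opt : optimal_in_Xi Phi nu mu w) (w_fin : (Phi w < +oo)%E).

Lemma optimal_sum_Fpt_ge0 eta :
  in_Xi nu mu eta -> 0 <= \sum_i eta i * Fpt Phi w i.
Proof.
move=> eta_Xi; have [w_Xi Phi_min] := w_opt; have [w_design _] := w_Xi.
have [_ Phi_dir] := Phi_lin w_design w_fin.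
have eta_dir := Phi_dir eta eta_Xi.1.
rewrite -lee_fin -(cvg_lim _ eta_dir) //.
apply: lime_ge; first exact: cvgP eta_dir.
have w_fin_num := lin_differentiable_fin_num w_design w_fin.
near=> a.
have a_gt0 : 0 < a by near: a; exact: nbhs_right_gt.
have a_lt1 : a < 1 by near: a; apply: nbhs_right_lt; exact: ltr01.
rewrite /dirquot; apply: mule_ge0; last by rewrite lee_fin invr_ge0 ltW.
rewrite sube_ge0 ?w_fin_num //; apply: Phi_min; apply: in_Xi_mixd => //.
by rewrite !ltW.
Unshelve. all: by end_near.
Qed.

Lemma optimal_Fpt_interior_le (i j : 'I_N) :
  (forall k, 0 <= nu k) -> nu i < w i < mu i -> nu j < w j < mu j ->
  Fpt Phi w i <= Fpt Phi w j.
Proof.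
move=> nu_ge0 /andP[nu_i _] /andP[_ mu_j].
have [->|ij] := eqVneq i j; first by [].
have [w_Xi _] := w_opt.
pose e := Num.min (mu j - w j) (w i - nu i).
have e_gt0 : 0 < e by rewrite lt_min !subr_gt0 mu_j nu_i.
have e_le_j : e <= mu j - w j by rewrite ge_min lexx.
have e_le_i : e <= w i - nu i by rewrite ge_min lexx orbT.
have e_Xi := in_Xi_transfer nu_ge0 w_Xi ij (ltW e_gt0) e_le_j e_le_i.
have := optimal_sum_Fpt_ge0 e_Xi.
rewrite sum_transfer_mul (lin_differentiable_sum_self w_Xi.1 w_fin) add0r.
by rewrite pmulr_rge0 // subr_ge0.
Qed.

End Optimum.

End DirectionalDerivative.

Unset Implicit Arguments.

(* Convexity and smoothness of Phi, and the bounds on sum nu and sum mu,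
   only serve to guarantee that an optimal design exists. *)
Theorem mainTheorem3 (R : realType) (N p : nat) (I : 'I_N -> 'M[R]_p)
  (psi : 'M[R]_p -> \bar R) (nu mu w : 'I_N -> R) :
  let Phi := fun xi : 'I_N -> R => psi (info_mx I xi) in
  (forall i, 0 <= nu i < mu i) ->
  \sum_i nu i <= 1 -> 1 <= \sum_i mu i ->
  in_Lambda Phi ->
  optimal_in_Xi Phi nu mu w ->
  (Phi w < +oo)%E ->
  (exists i, nu i < w i < mu i) ->
  exists s : R,
    (forall i, nu i < w i < mu i -> Fpt Phi w i = s) /\
    s = (- (\sum_(i | w i == nu i) Fpt Phi w i * nu i)
         - (\sum_(i | w i == mu i) Fpt Phi w i * mu i))
        / (1 - (\sum_(i | w i == nu i) nu i + \sum_(i | w i == mu i) mu i)).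
Proof.
move=> Phi nu_mu _ _ [_ [Phi_lin _]] w_opt w_fin [i0 i0_int].
have nu_ge0 k : 0 <= nu k by have /andP[] := nu_mu k.
have nu_lt_mu k : nu k < mu k by have /andP[] := nu_mu k.
have [[[w_ge0 w_sum1] w_bounds] _] := w_opt.
have F_int i : nu i < w i < mu i -> Fpt Phi w i = Fpt Phi w i0.
  have F_le := optimal_Fpt_interior_le Phi_lin w_opt w_fin nu_ge0.
  by move=> i_int; apply/le_anti; rewrite !F_le.
exists (Fpt Phi w i0); split => //.
apply: (interior_common_value nu_lt_mu w_bounds nu_ge0 w_sum1 _ i0_int F_int).
exact: (lin_differentiable_sum_self Phi_lin (conj w_ge0 w_sum1) w_fin).
Qed.
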